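(* Let $d_1,d_2\ge1$. Consider the gate $\Gamma_C$ with vertices $v_{i,j}$ ($i\in[d_1]$, $j\in[d_2]$), each with signature $\mathtt{PASS}$ (incident edges ordered north, east, south, west), where $v_{i,j}$'s east edge is $v_{i,j+1}$'s west edge and $v_{i,j}$'s south edge is $v_{i+1,j}$'s north edge; its dangling edges form four groups $x_1=(x_{1,1},\dots,x_{1,d_1})$, $x_2=(x_{2,1},\dots,x_{2,d_2})$, $y_1\in\{0,1\}^{d_1}$, $y_2\in\{0,1\}^{d_2}$, where $x_{1,i}$ is the west edge of $v_{i,1}$, the east edge of $v_{i,d_2}$ is the $(d_1+1-i)$-th edge of $y_1$, $x_{2,j}$ is the north edge of $v_{1,j}$, and the south edge of $v_{d_1,j}$ is the $(d_2+1-j)$-th edge of $y_2$. Then $$\mathrm{Sig}(\Gamma_C)(x_1,x_2,y_1,y_2)=C(x_1,x_2,y_1,y_2):=(-1)^{\mathtt{ODD}(x_1)\mathtt{ODD}(x_2)}[y_1=x_1^{-1}][y_2=x_2^{-1}],$$ and the grid cap function $O(x_1,x_2,y_1,y_2):=[y_1=x_1^{-1}][y_2=x_2^{-1}]$ satisfies, for all arguments, $$O=\tfrac12\big(1+(-1)^{\mathtt{ODD}(x_1)}+(-1)^{\mathtt{ODD}(x_2)}-(-1)^{\mathtt{ODD}(x_1)+\mathtt{ODD}(x_2)}\big)\cdot C.$$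
   Context: $\mathtt{PASS}(1111)=-1$, $\mathtt{PASS}(0000)=\mathtt{PASS}(0101)=\mathtt{PASS}(1010)=1$, $\mathtt{PASS}=0$ otherwise (bits ordered north, east, south, west). $\mathtt{ODD}(x)$ is the Hamming weight of $x$ mod $2$. For a string $x=x_1\cdots x_d$, $x^{-1}=x_d\cdots x_1$ is its reversal. $[\varphi]$ is $1$ if $\varphi$ holds and $0$ otherwise. The signature of a gate $\Gamma$ with dangling edge set $D$ is $\mathrm{Sig}(\Gamma,x)=\sum_{y\in\{0,1\}^{E(\Gamma)\setminus D}}w_\Gamma(xy)\prod_v f_v((xy)|_{I(v)})$, with $w_\Gamma(z)$ the product of the weights of active edges (here all weights are $1$). *)

From HB Require Import structures.
From mathcomp Require Import all_boot all_order all_algebra.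
Set Implicit Arguments. Unset Strict Implicit. Unset Printing Implicit Defensive.
Import Order.TTheory GRing.Theory Num.Theory.
Local Open Scope ring_scope.

(* A bit string of length n is a function 'I_n -> bool (0-based positions). *)
Definition bits (n : nat) := {ffun 'I_n -> bool}.

(* nat-indexed access (out-of-range positions are never used below) *)
Definition getb n (f : bits n) (k : nat) : bool :=
  if insub k is Some o then f o else false.
Definition getb2 m n (f : {ffun 'I_m * 'I_n -> bool}) (a b : nat) : bool :=
  match insub a, insub b with Some o, Some p => f (o, p) | _, _ => false end.

Definition PASS (N E S W : bool) : rat :=
  match N, E, S, W with
  | true, true, true, true => -1
  | false, false, false, false => 1
  | false, true, false, true => 1
  | true, false, true, false => 1
  | _, _, _, _ => 0
  end.

Definition ODD n (x : bits n) : bool := odd #|[pred i | x i]|.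

Definition revb n (x : bits n) : bits n := [ffun i => x (rev_ord i)].

(* Edges of the grid gate Gamma_C (0-based: vertex v_{i,j} with i < d1, j < d2).
   H (i,j) : internal horizontal edge = east edge of v_{i,j} = west edge of v_{i,j+1}, j < d2-1.
   V (i,j) : internal vertical edge = south edge of v_{i,j} = north edge of v_{i+1,j}, i < d1-1. *)
Section Grid.
Variables (d1 d2 : nat) (x1 : bits d1) (x2 : bits d2) (y1 : bits d1) (y2 : bits d2)
  (H : {ffun 'I_d1 * 'I_d2.-1 -> bool}) (V : {ffun 'I_d1.-1 * 'I_d2 -> bool}).

Definition westE (i j : nat) : bool :=
  if j == 0%N then getb x1 i else getb2 H i j.-1.
Definition eastE (i j : nat) : bool :=
  if j == d2.-1 then getb y1 (d1.-1 - i) else getb2 H i j.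
Definition northE (i j : nat) : bool :=
  if i == 0%N then getb x2 j else getb2 V i.-1 j.
Definition southE (i j : nat) : bool :=
  if i == d1.-1 then getb y2 (d2.-1 - j) else getb2 V i j.

Definition gridWeight : rat :=
  \prod_(i < d1) \prod_(j < d2) PASS (northE i j) (eastE i j) (southE i j) (westE i j).
End Grid.

(* Sig(Gamma_C)(x1,x2,y1,y2): sum over assignments of the internal edges
   (all edge weights are 1). *)
Definition SigGrid d1 d2 (x1 : bits d1) (x2 : bits d2) (y1 : bits d1) (y2 : bits d2) : rat :=
  \sum_(H : {ffun 'I_d1 * 'I_d2.-1 -> bool})
   \sum_(V : {ffun 'I_d1.-1 * 'I_d2 -> bool}) gridWeight x1 x2 y1 y2 H V.

Definition Ocap d1 d2 (x1 : bits d1) (x2 : bits d2) (y1 : bits d1) (y2 : bits d2) : rat :=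
  (y1 == revb x1)%:R * (y2 == revb x2)%:R.

Definition Cfun d1 d2 (x1 : bits d1) (x2 : bits d2) (y1 : bits d1) (y2 : bits d2) : rat :=
  (-1) ^+ (ODD x1 * ODD x2)%N * (y1 == revb x1)%:R * (y2 == revb x2)%:R.

(* A PASS vertex has nonzero weight only if it passes its north bit to the south and its
   west bit to the east.  Hence in every configuration of nonzero weight each row carries
   its input bit of x1 straight across and each column its input bit of x2 straight down:
   the internal edges are determined, and the outputs must be the reversed inputs.  In the
   unique surviving configuration the vertex v_{i,j} contributes -1 exactly when both
   x_{1,i} and x_{2,j} are 1, so the total sign is (-1)^(|x1| |x2|). *)
From HB Require Import structures.
From mathcomp Require Import all_boot all_order all_algebra zify ring.
Set Implicit Arguments. Unset Strict Implicit. Unset Printing Implicit Defensive.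
Import Order.TTheory GRing.Theory Num.Theory.
Local Open Scope ring_scope.

Lemma getbE k (f : bits k) (o : 'I_k) : getb f o = f o.
Proof. by rewrite /getb valK. Qed.

Lemma getb2E a b (f : {ffun 'I_a * 'I_b -> bool}) (o : 'I_a) (p : 'I_b) :
  getb2 f o p = f (o, p).
Proof. by rewrite /getb2 !valK. Qed.

Lemma getb_revb k (x : bits k.+1) (j : 'I_k.+1) : getb (revb x) (k - j) = x j.
Proof.
have lt_kj : (k - j < k.+1)%N by lia.
rewrite (getbE _ (Ordinal lt_kj)) ffunE; congr (x _); apply: val_inj => /=.
by have := ltn_ord j; lia.
Qed.

Lemma PASS_neq0 n e s w : PASS n e s w != 0 -> n = s /\ e = w.
Proof. by case: n; case: e; case: s; case: w. Qed.

Lemma PASS_straight a b : PASS a b a b = (-1) ^+ (a && b).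
Proof. by case: a; case: b. Qed.

Lemma sum_bits_card k (x : bits k) : (\sum_(i < k) (x i : nat))%N = #|[pred i | x i]|.
Proof.
by rewrite -sum1_card [RHS]big_mkcond; apply: eq_bigr => i _; rewrite inE; case: (x i).
Qed.

Lemma ODD_mul_sum m n (x1 : bits m) (x2 : bits n) :
  (ODD x1 * ODD x2)%N = odd (\sum_(i < m) \sum_(j < n) (x1 i && x2 j : nat)) :> nat.
Proof.
rewrite /ODD mulnb -oddM -!sum_bits_card big_distrl; congr odd; apply: eq_bigr => i _.
by rewrite big_distrr; apply: eq_bigr => j _; case: (x1 i); case: (x2 j).
Qed.

Lemma cap_sign_coefficient (R : numFieldType) (a b : bool) :
  2^-1 * (1 + (-1) ^+ a + (-1) ^+ b - (-1) ^+ (a + b)%N) * (-1) ^+ (a * b)%N = 1 :> R.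
Proof. by case: a; case: b; rewrite /= ?expr0 ?expr1; field. Qed.

Section GridGate.
Variables (m n : nat) (x1 : bits m.+1) (x2 : bits n.+1).

Lemma eastE_westS (y1 : bits m.+1) (H : {ffun 'I_m.+1 * 'I_n -> bool}) (i j : nat) :
  (j < n)%N -> @eastE m.+1 n.+1 y1 H i j = @westE m.+1 n.+1 x1 H i j.+1.
Proof. by move=> lt_jn; rewrite /eastE /westE /= ifN // neq_ltn lt_jn. Qed.

Lemma southE_northS (y2 : bits n.+1) (V : {ffun 'I_m * 'I_n.+1 -> bool}) (i j : nat) :
  (i < m)%N -> @southE m.+1 n.+1 y2 V i j = @northE m.+1 n.+1 x2 V i.+1 j.
Proof. by move=> lt_im; rewrite /southE /northE /= ifN // neq_ltn lt_im. Qed.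

Section NonzeroWeight.
Variables (y1 : bits m.+1) (y2 : bits n.+1) (H : {ffun 'I_m.+1 * 'I_n -> bool}) (V : {ffun 'I_m * 'I_n.+1 -> bool}).
Hypothesis weight_neq0 : gridWeight x1 x2 y1 y2 H V != 0.

Let vertex_passes (i : 'I_m.+1) (j : 'I_n.+1) :
  @northE m.+1 n.+1 x2 V i j = @southE m.+1 n.+1 y2 V i j /\ @eastE m.+1 n.+1 y1 H i j = @westE m.+1 n.+1 x1 H i j.
Proof.
apply: PASS_neq0.
by move/prodf_neq0: weight_neq0 => /(_ i isT) /prodf_neq0 /(_ j isT).
Qed.

Let westE_row (i : 'I_m.+1) j : (j < n.+1)%N -> @westE m.+1 n.+1 x1 H i j = getb x1 i.
Proof.
elim: j => [//|j IH] lt_jn.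
by rewrite -(eastE_westS y1 _ _ lt_jn) -IH ?(vertex_passes i (Ordinal (ltnW lt_jn))).2 // ltnW.
Qed.

Let northE_column (j : 'I_n.+1) i : (i < m.+1)%N -> @northE m.+1 n.+1 x2 V i j = getb x2 j.
Proof.
elim: i => [//|i IH] lt_im.
by rewrite -(southE_northS y2 _ _ lt_im) -IH ?(vertex_passes (Ordinal (ltnW lt_im)) j).1 // ltnW.
Qed.

Lemma gridWeight_neq0_horizontal : H = [ffun p => x1 p.1].
Proof.
apply/ffunP => -[i j]; rewrite ffunE /= -(getb2E H) -getbE.
have lt_jn : (j < n.+1)%N := ltn_trans (ltn_ord j) (ltnSn n).
by rewrite -(westE_row i lt_jn) -(vertex_passes i (Ordinal lt_jn)).2 /eastE /= ifN // neq_ltn ltn_ord.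
Qed.

Lemma gridWeight_neq0_vertical : V = [ffun p => x2 p.2].
Proof.
apply/ffunP => -[i j]; rewrite ffunE /= -(getb2E V) -getbE.
have lt_im : (i < m.+1)%N := ltn_trans (ltn_ord i) (ltnSn m).
by rewrite -(northE_column j lt_im) (vertex_passes (Ordinal lt_im) j).1 /southE /= ifN // neq_ltn ltn_ord.
Qed.

Lemma gridWeight_neq0_outputs : y1 = revb x1 /\ y2 = revb x2.
Proof.
split; apply/ffunP => k; rewrite ffunE.
- have := (vertex_passes (rev_ord k) ord_max).2.
  rewrite westE_row // /eastE /= eqxx -!getbE => <-.
  by congr getb; have := ltn_ord k; lia.
- have := (vertex_passes ord_max (rev_ord k)).1.
  rewrite northE_column // /southE /= eqxx -!getbE => ->.
  by congr getb; have := ltn_ord k; lia.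
Qed.

End NonzeroWeight.

Section StraightConfiguration.
Let Hs : {ffun 'I_m.+1 * 'I_n -> bool} := [ffun p => x1 p.1].
Let Vs : {ffun 'I_m * 'I_n.+1 -> bool} := [ffun p => x2 p.2].

Let westE_straight (i : 'I_m.+1) (j : 'I_n.+1) : @westE m.+1 n.+1 x1 Hs i j = x1 i.
Proof.
rewrite /westE; case: j => [[|j] lt_jn] /=; first by rewrite getbE.
by rewrite (getb2E _ i (Ordinal (lt_jn : (j < n)%N))) ffunE.
Qed.

Let northE_straight (i : 'I_m.+1) (j : 'I_n.+1) : @northE m.+1 n.+1 x2 Vs i j = x2 j.
Proof.
rewrite /northE; case: i => [[|i] lt_im] /=; first by rewrite getbE.
by rewrite (getb2E _ (Ordinal (lt_im : (i < m)%N)) j) ffunE.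
Qed.

Let eastE_straight (i : 'I_m.+1) (j : 'I_n.+1) : @eastE m.+1 n.+1 (revb x1) Hs i j = x1 i.
Proof.
rewrite /eastE /=; case: eqP => [_|ne_jn]; first by rewrite getb_revb.
have lt_jn : (j < n)%N by have := ltn_ord j; lia.
by rewrite (getb2E _ i (Ordinal lt_jn)) ffunE.
Qed.

Let southE_straight (i : 'I_m.+1) (j : 'I_n.+1) : @southE m.+1 n.+1 (revb x2) Vs i j = x2 j.
Proof.
rewrite /southE /=; case: eqP => [_|ne_im]; first by rewrite getb_revb.
have lt_im : (i < m)%N by have := ltn_ord i; lia.
by rewrite (getb2E _ (Ordinal lt_im) j) ffunE.
Qed.

Lemma gridWeight_straight :
  gridWeight x1 x2 (revb x1) (revb x2) Hs Vs = (-1) ^+ (ODD x1 * ODD x2).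
Proof.
rewrite /gridWeight ODD_mul_sum signr_odd -prodrXr; apply: eq_bigr => i _.
rewrite -prodrXr; apply: eq_bigr => j _.
by rewrite northE_straight eastE_straight southE_straight westE_straight PASS_straight andbC.
Qed.

End StraightConfiguration.

Lemma SigGrid_eq_Cfun (y1 : bits m.+1) (y2 : bits n.+1) : SigGrid x1 x2 y1 y2 = Cfun x1 x2 y1 y2.
Proof.
have [/andP[/eqP-> /eqP->] | not_rev] := boolP ((y1 == revb x1) && (y2 == revb x2)).
  rewrite /SigGrid /Cfun !eqxx !mulr1.
  rewrite (bigD1 [ffun p => x1 p.1]) //= (bigD1 [ffun p => x2 p.2]) //=.
  rewrite gridWeight_straight big1 ?addr0 => [|V ne_V]; last first.
    by apply/eqP/contraT => /gridWeight_neq0_vertical eq_V; rewrite eq_V eqxx in ne_V.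
  rewrite big1 ?addr0 // => H ne_H; apply: big1 => V _.
  by apply/eqP/contraT => /gridWeight_neq0_horizontal eq_H; rewrite eq_H eqxx in ne_H.
have -> : Cfun x1 x2 y1 y2 = 0.
  by rewrite /Cfun; move: not_rev; do 2!case: (_ == _); rewrite ?mulr0.
apply: big1 => H _; apply: big1 => V _; apply/eqP/contraT.
by move=> /gridWeight_neq0_outputs [eq_y1 eq_y2]; rewrite eq_y1 eq_y2 !eqxx in not_rev.
Qed.

End GridGate.

Theorem mainTheorem9 (d1 d2 : nat) (hd1 : (1 <= d1)%N) (hd2 : (1 <= d2)%N)
    (x1 : bits d1) (x2 : bits d2) (y1 : bits d1) (y2 : bits d2) :
  SigGrid x1 x2 y1 y2 = Cfun x1 x2 y1 y2 /\
  Ocap x1 x2 y1 y2 =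
    2^-1 * (1 + (-1) ^+ ODD x1 + (-1) ^+ ODD x2 - (-1) ^+ (ODD x1 + ODD x2)%N)
      * Cfun x1 x2 y1 y2.
Proof.
split.
  case: d1 hd1 x1 y1 => [//|m] _ x1 y1.
  by case: d2 hd2 x2 y2 => [//|n] _ x2 y2; apply: SigGrid_eq_Cfun.
rewrite /Ocap /Cfun !mulrA cap_sign_coefficient mul1r; reflexivity.
Qed.
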